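(* Let $0<\beta<1$, $\bar{x}\in\mathcal{X}$, and $z=F_{\bar{x}}^{-1}(\beta)$. Suppose that $x\mapsto f(x,Y)$ is continuous at $\bar{x}$ with probability 1, that $F_{\bar{x}}$ is continuous at $z$, and that $F_{\bar{x}}$ is strictly increasing at $F_{\bar{x}}^{-1}(\beta)$ in the sense that for all $\epsilon>0$, $$F_{\bar{x}}\big(F_{\bar{x}}^{-1}(\beta)-\epsilon\big)<\beta<F_{\bar{x}}\big(F_{\bar{x}}^{-1}(\beta)+\epsilon\big).$$ Then $x\mapsto F_x^{-1}(\beta)$ is continuous at $\bar{x}$.
   Context: $Y$ is a random vector in $\mathbb{R}^d$, $\mathcal{X}\subset\mathbb{R}^k$, $f:\mathcal{X}\times\mathbb{R}^d\to\mathbb{R}$ with $f(x,Y)$ measurable for all $x$, $F_x(z)=\mathbb{P}(f(x,Y)\le z)$ and $F_x^{-1}(\beta)=\inf\{z\in\mathbb{R}: F_x(z)\ge\beta\}$. *)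

From HB Require Import structures.
From mathcomp Require Import all_boot all_order all_algebra.
From mathcomp Require Import all_classical all_reals all_analysis.
Set Implicit Arguments. Unset Strict Implicit. Unset Printing Implicit Defensive.
Import Order.TTheory GRing.Theory Num.Theory.
Import numFieldNormedType.Exports.
Local Open Scope classical_set_scope.
Local Open Scope ring_scope.

Definition cdfF {dm : measure_display} {T : measurableType dm} {R : realType}
  (P : probability T R) {k d : nat} (f : 'rV[R]_k -> 'rV[R]_d -> R)
  (Y : T -> 'rV[R]_d) (x : 'rV[R]_k) (z : R) : R :=
  fine (P [set w | f x (Y w) <= z]).

Definition quantF {dm : measure_display} {T : measurableType dm} {R : realType}
  (P : probability T R) {k d : nat} (f : 'rV[R]_k -> 'rV[R]_d -> R)
  (Y : T -> 'rV[R]_d) (x : 'rV[R]_k) (beta : R) : R :=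
  inf [set z : R | beta <= cdfF P f Y x z].

From HB Require Import structures.
From mathcomp Require Import all_boot all_order all_algebra.
From mathcomp Require Import all_classical all_reals all_analysis.
From mathcomp Require Import measurable_realfun lra.
Import Order.TTheory GRing.Theory Num.Theory.
Import numFieldNormedType.Exports.
Local Open Scope classical_set_scope.
Local Open Scope ring_scope.

(* Given e > 0, strict increase at z gives F_xbar(z - e) < beta < F_xbar(z + e/2),
   and these strict inequalities persist for x near xbar.  Indeed, along any
   sequence x_n -> xbar the variables f(x_n, Y) converge to f(xbar, Y) almost
   surely, so for an open set U, P(f(xbar, Y) in U) is bounded by every common
   bound of the P(f(x_n, Y) in U): a.s. the event {f(xbar, Y) in U} implies that
   {f(x_n, Y) in U} holds eventually, and the measure of the increasing union of
   the tail intersections is a limit.  Thus F_x(z - e) < beta <= F_x(z + e) for x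
   near xbar, which confines F_x^{-1}(beta) to [z - e, z + e]. *)

Section measure_eventually.
Context {d : measure_display} {T : measurableType d} {R : realType}.
Variable mu : {measure set T -> \bar R}.

Lemma measure_le_of_ae_eventually (A : nat -> set T) (S : set T) (c : \bar R) :
  (forall n, measurable (A n)) -> measurable S ->
  {ae mu, forall w, S w -> \forall n \near \oo, A n w} ->
  (forall n, (mu (A n) <= c)%E) -> (mu S <= c)%E.
Proof.
move=> mA mS [N [mN muN0 notSN]] Ac.
pose B M := \bigcap_(n in [set n | (M <= n)%N]) A n.
have mB M : measurable (B M) by apply: bigcap_measurable => //; exists M => /=.
have mUB : measurable (\bigcup_M B M) by exact: bigcupT_measurable.
have B_nd : {homo B : n m / (n <= m)%N >-> (n <= m)%O}.
  move=> n m nm; apply/subsetPset => w Bw j /= mj; exact/Bw/(leq_trans nm).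
have muUB : (mu (\bigcup_M B M) <= c)%E.
  have cvB := @nondecreasing_cvg_mu _ _ _ mu _ mB mUB B_nd.
  rewrite -(cvg_lim _ cvB) //; apply: lime_le; first exact: cvgP cvB.
  near=> M; apply: le_trans (Ac M); apply: le_measure; rewrite ?inE //.
  by move=> w /(_ M (leqnn M)).
have SNUB : S `<=` N `|` \bigcup_M B M.
  move=> w Sw; have [Nw|Nw] := pselect (N w); [by left | right].
  have /contrapT /(_ Sw) [M _ HM] := contra_not (notSN w) Nw.
  by exists M => // n /= /HM.
apply: le_trans (le_measure _ _ _ SNUB) _; rewrite ?inE //; first exact: measurableU.
apply: le_trans (measureU2 _ mN mUB) _.
by rewrite [X in (X + _)%E]muN0 add0e.
Unshelve. all: end_near.
Qed.

Lemma measurable_preimage_open {g : T -> R} {U : set R} :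
  measurable_fun setT g -> open U -> measurable (g @^-1` U).
Proof.
by move=> mg oU; rewrite -[_ @^-1` _]setTI; apply: mg => //; exact: open_measurable.
Qed.

Lemma measure_preimage_open_le (g_ : nat -> T -> R) (g : T -> R) (U : set R)
    (c : \bar R) :
  open U -> (forall n, measurable_fun setT (g_ n)) -> measurable_fun setT g ->
  {ae mu, forall w, g_ n w @[n --> \oo] --> g w} ->
  (forall n, (mu (g_ n @^-1` U) <= c)%E) -> (mu (g @^-1` U) <= c)%E.
Proof.
move=> oU mg_ mg cvg_g.
apply: measure_le_of_ae_eventually => [n||]; try exact: measurable_preimage_open.
apply: filterS cvg_g => w gw Uw; apply: gw; exact: open_nbhs_nbhs.
Qed.

End measure_eventually.

Lemma not_near_within_seq (R : realType) (V : pseudoMetricType R) (X : set V)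
    (p : V) (Q : V -> Prop) :
  ~ (\forall x \near within X (nbhs p), Q x) ->
  exists u : nat -> V,
    [/\ u n @[n --> \oo] --> within X (nbhs p), forall n, X (u n)
      & forall n, ~ Q (u n)].
Proof.
move=> notQ.
have near_p n : exists x, [/\ ball p n.+1%:R^-1 x, X x & ~ Q x].
  apply: contrapT => nx; apply: notQ.
  apply/nbhs_ballP; exists n.+1%:R^-1 => [|x px Xx]; first by rewrite /= invr_gt0.
  by apply: contrapT => nQx; apply: nx; exists x.
have [u Hu] := choice near_p.
exists u; split=> [A /nbhs_ballP [r /= r0 rA]|n|n]; try by case: (Hu n).
apply: filterS (nbhs_infty_ger r^-1) => n rn /=.
have [pun Xun _] := Hu n; apply: rA Xun; apply: le_ball pun.
rewrite ltW // invf_plt ?posrE ?ltr0Sn //.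
by apply: le_lt_trans rn _; rewrite ltr_nat.
Qed.

Lemma inf_superlevel_itv (R : realType) (F : R -> R) (beta a b : R) :
  {homo F : s t / s <= t} -> F a < beta -> beta <= F b ->
  a <= inf [set t | beta <= F t] <= b.
Proof.
move=> F_nd Fa Fb; have lb_a : lbound [set t | beta <= F t] a.
  move=> t /= Ft; rewrite leNgt; apply/negP => ta.
  by have := F_nd _ _ (ltW ta); rewrite leNgt (lt_le_trans Fa Ft).
apply/andP; split; first by apply: lb_le_inf => //; exists b.
by apply: ge_inf => //; exists a.
Qed.

Section cdf_near.
Context {dm : measure_display} {T : measurableType dm} {R : realType}.
Variables (P : probability T R) (k d : nat) (X : set 'rV[R]_k).
Variables (f : 'rV[R]_k -> 'rV[R]_d -> R) (Y : T -> 'rV[R]_d).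
Hypothesis mf : forall x, X x -> measurable_fun setT (fun w => f x (Y w)).

Local Notation F := (cdfF P f Y).

Lemma measurable_le_event x t : X x -> measurable [set w | f x (Y w) <= t].
Proof.
move=> Xx; have := measurable_fun_le measurableT (mf _ Xx) (measurable_cst t).
by rewrite setTI.
Qed.

Lemma cdfFE x t : X x -> P [set w | f x (Y w) <= t] = (F x t)%:E.
Proof.
by move=> Xx; rewrite fineK //; apply: fin_num_measure; exact: measurable_le_event.
Qed.

Lemma cdfF_complE x t : X x -> P [set w | t < f x (Y w)] = (1 - F x t)%:E.
Proof.
move=> Xx; have -> : [set w | t < f x (Y w)] = ~` [set w | f x (Y w) <= t].
  by apply/seteqP; split=> w /=; rewrite ltNge => /negP.
by rewrite probability_setC ?cdfFE //; exact: measurable_le_event.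
Qed.

Lemma cdfF_nondecreasing x : X x -> {homo F x : s t / s <= t}.
Proof.
move=> Xx s t st; rewrite -lee_fin -!cdfFE //.
apply: le_measure; rewrite ?inE; try exact: measurable_le_event.
by move=> w /= /le_trans; apply.
Qed.

Lemma measurable_lt_event x t : X x -> measurable [set w | f x (Y w) < t].
Proof. by move=> Xx; exact: measurable_preimage_open (mf _ Xx) (@open_lt _ t). Qed.

Lemma cdfF_le_lt_event {x s t} : X x -> s < t ->
  ((F x s)%:E <= P [set w | (f x (Y w) < t)%R] <= (F x t)%:E)%E.
Proof.
move=> Xx st; rewrite -!cdfFE //; apply/andP; split.
  apply: le_measure; rewrite ?inE; [exact: measurable_le_event | exact: measurable_lt_event|].
  by move=> w /= /le_lt_trans; apply.
apply: le_measure; rewrite ?inE; [exact: measurable_lt_event | exact: measurable_le_event|].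
by move=> w /= /ltW.
Qed.

Section limit_point.
Variable xbar : 'rV[R]_k.
Hypotheses (Xxbar : X xbar)
  (cvg_f : {ae P, forall w,
     (fun x => f x (Y w)) @ within X (nbhs xbar) --> f xbar (Y w)}).

Lemma near_cdfF_gt beta s t : s < t -> beta < F xbar s ->
  \forall x \near within X (nbhs xbar), beta < F x t.
Proof.
move=> st Fs; apply: contrapT => /not_near_within_seq [u [u_xbar Xu notFu]].
have /andP[Fs_lt _] := cdfF_le_lt_event Xxbar st.
suff : (P [set w | (f xbar (Y w) < t)%R] <= beta%:E)%E.
  by apply/negP; rewrite -ltNge (lt_le_trans _ Fs_lt) ?lte_fin.
apply: (@measure_preimage_open_le _ _ _ P (fun n w => f (u n) (Y w))
  (fun w => f xbar (Y w)) [set r | r < t]) => [|n|||n].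
- exact: open_lt.
- exact: mf.
- exact: mf.
- apply: filterS cvg_f => w fw; exact: cvg_comp u_xbar fw.
- have /andP[_ lt_Ft] := cdfF_le_lt_event (Xu n) st.
  by apply: le_trans lt_Ft _; rewrite lee_fin leNgt; apply/negP.
Qed.

Lemma near_cdfF_lt beta t : F xbar t < beta ->
  \forall x \near within X (nbhs xbar), F x t < beta.
Proof.
move=> Ft; apply: contrapT => /not_near_within_seq [u [u_xbar Xu notFu]].
suff : (P [set w | (t < f xbar (Y w))%R] <= (1 - beta)%:E)%E.
  by rewrite cdfF_complE // lee_fin lerD2l lerN2 leNgt Ft.
apply: (@measure_preimage_open_le _ _ _ P (fun n w => f (u n) (Y w))
  (fun w => f xbar (Y w)) [set r | t < r]) => [|n|||n].
- exact: open_gt.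
- exact: mf.
- exact: mf.
- apply: filterS cvg_f => w fw; exact: cvg_comp u_xbar fw.
- by rewrite /preimage /= cdfF_complE // lee_fin lerD2l lerN2 leNgt; apply/negP.
Qed.

End limit_point.
End cdf_near.

Theorem mainTheorem13 (dm : measure_display) (T : measurableType dm)
  (R : realType) (P : probability T R) (k d : nat)
  (X : set 'rV[R]_k) (f : 'rV[R]_k -> 'rV[R]_d -> R) (Y : T -> 'rV[R]_d)
  (beta : R) (xbar : 'rV[R]_k) :
  (forall x, X x -> measurable_fun setT (fun w => f x (Y w))) ->
  0 < beta < 1 ->
  X xbar ->
  let z := quantF P f Y xbar beta in
  {ae P, forall w, (fun x => f x (Y w)) @ within X (nbhs xbar) --> f xbar (Y w)} ->
  {for z, continuous (cdfF P f Y xbar)} ->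
  (forall eps, 0 < eps ->
     cdfF P f Y xbar (z - eps) < beta < cdfF P f Y xbar (z + eps)) ->
  (fun x => quantF P f Y x beta) @ within X (nbhs xbar) --> z.
Proof.
move=> mf _ Xxbar z cvg_f _ incr_z; apply/cvgrPdist_le => e e0.
have e20 : 0 < e / 2 by rewrite divr_gt0.
have /andP[Fz_lt _] := incr_z e e0.
have /andP[_ Fz_gt] := incr_z _ e20.
near=> x.
have Xx : X x by near: x; exact: withinT.
have /andP[zq qz] : z - e <= quantF P f Y x beta <= z + e.
  rewrite /quantF; apply: inf_superlevel_itv.
  - exact: cdfF_nondecreasing Xx.
  - by near: x; exact: near_cdfF_lt.
  apply: ltW; near: x; apply: near_cdfF_gt Fz_gt => //.
  by rewrite ltrD2l gtr_pMr // invf_lt1 // ltr1n.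
by rewrite ler_norml; apply/andP; split; lra.
Unshelve. all: end_near.
Qed.
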